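(* Let $F=F(N,\mathcal D)$ be a connected GSC and let $x$ be a local cut point of $F$. For $n\ge1$ let $E'_n(x)=\bigcup_{\mathbf i\in\Omega_n(x)}\varphi_{\mathbf i}(F)$. Then there exists $m\ge1$ such that $x$ is a cut point of $E'_m(x)$.
   Context: GSC: $N\ge2$, $\mathcal D\subset\{0,\dots,N-1\}^2$ with $1<|\mathcal D|<N^2$, $\varphi_i(x)=\frac1N(x+i)$, $F$ the attractor $F=\bigcup_{i\in\mathcal D}\varphi_i(F)$; $\varphi_{i_1\cdots i_k}=\varphi_{i_1}\circ\cdots\circ\varphi_{i_k}$. $\Omega_n(x)=\{\mathbf i\in\mathcal D^n: x\in\varphi_{\mathbf i}(F)\}$. A local cut point of $F$ is a point that is a cut point (removal disconnects) of some connected neighborhood of itself in $F$. *)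

From HB Require Import structures.
From mathcomp Require Import all_boot all_order all_algebra.
From mathcomp Require Import all_classical all_reals all_analysis.
Set Implicit Arguments. Unset Strict Implicit. Unset Printing Implicit Defensive.
Import Order.TTheory GRing.Theory Num.Theory.
Import numFieldNormedType.Exports.
Local Open Scope classical_set_scope.
Local Open Scope ring_scope.

Section GSC.
Variables (R : realType) (N : nat).

Definition gsc_map (i : 'I_N * 'I_N) (p : R * R) : R * R :=
  ((p.1 + (i.1 : nat)%:R) / N%:R, (p.2 + (i.2 : nat)%:R) / N%:R).

Definition gsc_word_map (w : seq ('I_N * 'I_N)) (p : R * R) : R * R :=
  foldr gsc_map p w.

Definition is_gsc_attractor (D : {set 'I_N * 'I_N}) (F : set (R * R)) : Prop :=
  [/\ compact F, F !=set0 &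
      F = \bigcup_(i in [set i | i \in D]) (gsc_map i @` F)].

Definition Omega (D : {set 'I_N * 'I_N}) (F : set (R * R)) (n : nat) (x : R * R)
  : set (seq ('I_N * 'I_N)) :=
  [set w | [/\ size w = n, all (fun i => i \in D) w & (gsc_word_map w @` F) x]].

Definition E' (D : {set 'I_N * 'I_N}) (F : set (R * R)) (n : nat) (x : R * R)
  : set (R * R) :=
  \bigcup_(w in Omega D F n x) (gsc_word_map w @` F).

End GSC.

Definition cut_point {T : topologicalType} (A : set T) (x : T) : Prop :=
  A x /\ ~ connected (A `\ x).

Definition local_cut_point {T : topologicalType} (F : set T) (x : T) : Prop :=
  exists U : set T,
    [/\ U `<=` F, connected U,
        (exists2 O : set T, open O /\ O x & O `&` F `<=` U)
      & cut_point U x].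

From HB Require Import structures.
From mathcomp Require Import all_boot all_order all_algebra.
From mathcomp Require Import all_classical all_reals all_analysis.
Import Order.TTheory GRing.Theory Num.Theory.
Import numFieldNormedType.Exports.
Local Open Scope classical_set_scope.
Local Open Scope ring_scope.
Set Implicit Arguments.

(* Let U be a connected neighbourhood of x in F such that U \ {x} splits into
   two separated pieces A and B; connectedness of U forces x into the closure
   of both.  Level-m cells have diameter diam(F) / N^m, so for m large every
   cell through x lies in U, i.e. E'_m(x) is contained in U.  Finitely many
   closed cells cover F, so the cells missing x stay away from x and every
   point of F close to x lies in E'_m(x).  Hence E'_m(x) contains points of A
   and of B near x, and (A, B) cut along E'_m(x) separates E'_m(x) \ {x}. *)

Section CutPoints.
Context {T : topologicalType}.

Lemma separatedS (A B A' B' : set T) :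
  A' `<=` A -> B' `<=` B -> separated A B -> separated A' B'.
Proof.
move=> AA' BB' [clAB AclB]; split; rewrite -subset0 => y [].
- move=> /(closureS AA') clAy /BB' By.
  by have : (closure A `&` B) y by []; rewrite clAB.
- move=> /AA' Ay /(closureS BB') clBy.
  by have : (A `&` closure B) y by []; rewrite AclB.
Qed.

Lemma near_mem_closed_family {I : finType} {C : I -> set T} x :
  (forall i, closed (C i)) -> \forall y \near x, forall i, C i y -> C i x.
Proof.
move=> Ccl; apply: filter_forall => i.
have [Cix|nCix] := pselect (C i x); first exact: nearW.
apply: filterS (_ : nbhs x (~` C i)) => [y nCy /nCy //|].
by apply: open_nbhs_nbhs; split=> //; exact: closed_openC.
Qed.

Hypothesis hT : hausdorff_space T.

Lemma closure_separated_cut (U A B : set T) x :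
  connected U -> U x -> U `\ x = A `|` B -> separated A B -> B !=set0 ->
  closure B x.
Proof.
move=> cU Ux UAB sAB [b Bb]; apply: contrapT => nclBx.
(* otherwise x |` A and B would separate U *)
have notBx : ~ B x by move=> /(@subset_closure _ B).
have clx : closure [set x] = [set x].
  exact/esym/closure_id/accessible_closed_set1/hausdorff_accessible.
have sxAB : separated (x |` A) B.
  case: sAB => clAB AclB; split; apply/disjoints_subset => y.
  - rewrite closureU clx => -[->//|clAy By].
    by have : (closure A `&` B) y by []; rewrite clAB.
  - case=> [->//|Ay clBy].
    by have : (A `&` closure B) y by []; rewrite AclB.
have UxAB : U `<=` (x |` A) `|` B.
  move=> y Uy; have [->|yx] := pselect (y = x); first by left; left.
  by have : (U `\ x) y by []; rewrite UAB => -[Ay|By]; [left; right|right].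
have [Ub _] : (U `\ x) b by rewrite UAB; right.
case: (connected_subset sxAB UxAB cU) => [/(_ b Ub)|/(_ x Ux)//].
case=> [bx|Ab]; first by rewrite -bx in notBx.
by have : (A `&` B) b by []; rewrite (separated_disjoint sAB).
Qed.

Lemma cut_point_shrink (U V : set T) x :
  connected U -> cut_point U x -> V `<=` U -> V x ->
  (\forall y \near x, U y -> V y) -> cut_point V x.
Proof.
move=> cU [Ux /connectedPn[E [E0 UE sE]]] VU Vx nearV; split=> //.
apply/connectedPn; exists (fun b => E b `&` V); split.
- move=> b; have clEx : closure (E b) x.
    case: b; first exact: closure_separated_cut cU Ux UE sE (E0 true).
    apply: (@closure_separated_cut U (E true) _ x cU Ux _ _ (E0 false)).
    - by rewrite UE setUC.
    - by rewrite separatedC.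
  have [y [Eby UVy]] := clEx _ nearV.
  have [Uy _] : (U `\ x) y by rewrite UE; clear clEx; case: b Eby; [right|left].
  by exists y; split=> //; exact: UVy.
- apply/seteqP; split=> y.
  + case=> Vy yx; have : (U `\ x) y by split=> //; exact: VU.
    by rewrite UE => -[?|?]; [left|right].
  + case=> -[Ey Vy]; split=> //.
    * by have [] : (U `\ x) y by rewrite UE; left.
    * by have [] : (U `\ x) y by rewrite UE; right.
- exact: separatedS sE.
Qed.

End CutPoints.

Section GscMaps.
Variables (R : realType) (N : nat).

Lemma norm_gsc_mapB i (p q : R * R) :
  `|@gsc_map R N i p - gsc_map i q| = `|p - q| / N%:R.
Proof.
have shiftB (a b c : R) : (a + c) / N%:R - (b + c) / N%:R = (a - b) / N%:R.
  by rewrite -mulrBl opprD addrACA subrr addr0.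
by rewrite !prod_normE /= !shiftB !normrM normfV normr_nat maxr_pMl.
Qed.

Lemma norm_gsc_word_mapB w (p q : R * R) :
  `|@gsc_word_map R N w p - gsc_word_map w q| = `|p - q| / N%:R ^+ size w.
Proof.
elim: w => [|i w IHw] /=; first by rewrite expr0 divr1.
by rewrite norm_gsc_mapB IHw exprS invfM -mulrA [X in _ * X]mulrC.
Qed.

Hypothesis N_gt0 : (0 < N)%N.

Lemma gsc_word_map_continuous w : continuous (@gsc_word_map R N w).
Proof.
move=> p; apply/cvgrPdist_lt => e e_gt0.
have Nw_gt0 : 0 < (N%:R : R) ^+ size w by rewrite exprn_gt0 // ltr0n.
have /cvgrPdist_lt/(_ _ (mulr_gt0 e_gt0 Nw_gt0)) := @cvg_id _ (nbhs p).
by apply: filterS => y; rewrite norm_gsc_word_mapB ltr_pdivrMr.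
Qed.

End GscMaps.

Section Attractor.
Variables (R : realType) (N : nat) (D : {set 'I_N * 'I_N}) (F : set (R * R)).
Hypothesis F_attractor : is_gsc_attractor D F.

Lemma gsc_word_map_attractor w q :
  all (fun i => i \in D) w -> F q -> F (gsc_word_map w q).
Proof.
case: F_attractor => _ _ eF; elim: w => [|i w IHw] //= /andP[iD wD] Fq.
by rewrite eF; exists i => //; exists (gsc_word_map w q) => //; exact: IHw.
Qed.

Lemma Omega_nonempty m y : F y -> Omega D F m y !=set0.
Proof.
case: F_attractor => _ _ eF Fy.
elim: m => [|m [w [sw wD [q Fq qy]]]]; first by exists [::]; split => //; exists y.
move: Fq; rewrite {1}eF => -[i /= iD [q' Fq' qq']].
exists (rcons w i); split.
- by rewrite size_rcons sw.
- by rewrite all_rcons iD.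
- by exists q' => //; rewrite /gsc_word_map foldr_rcons qq'.
Qed.

Lemma E'_subset_attractor m x : E' D F m x `<=` F.
Proof. by move=> _ [w [_ wD _] [q Fq <-]]; exact: gsc_word_map_attractor. Qed.

Lemma E'_self m x : F x -> E' D F m x x.
Proof. by move=> /(Omega_nonempty m) [w wOmega]; exists w => //; case: wOmega. Qed.

Lemma E'_subset_ball (x : R * R) (r : R) : (1 < N)%N -> 0 < r ->
  \forall m \near \oo, E' D F m x `<=` ball x r.
Proof.
move=> N_gt1 r_gt0; case: F_attractor => cF _ _.
have [M FM] : exists M, forall p q, F p -> F q -> `|p - q| <= M.
  have [M0 [_ FM0]] := compact_bounded cF.
  exists ((M0 + 1) + (M0 + 1)) => p q Fp Fq.
  rewrite (le_trans (ler_normB p q)) // lerD // FM0 // ltrDl //.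
have /cvgryPgt/(_ (M / r)) := @cvgr_idn R.
apply: filterS => m Mr_lt_m _ [w [sw _ [p Fp px]] [q Fq <-]].
have Nm_gt0 : 0 < (N%:R : R) ^+ m by rewrite exprn_gt0 // ltr0n ltnW.
rewrite -ball_normE /ball_ /= -px norm_gsc_word_mapB sw ltr_pdivrMr //.
apply: (le_lt_trans (FM p q Fp Fq)); rewrite mulrC -ltr_pdivrMr //.
apply: (lt_le_trans Mr_lt_m); rewrite -natrX ler_nat; exact/ltnW/ltn_expl.
Qed.

Hypothesis N_gt0 : (0 < N)%N.

Lemma closed_gsc_cell w : closed (@gsc_word_map R N w @` F).
Proof.
case: F_attractor => cF _ _.
apply: compact_closed; first exact: norm_hausdorff.
apply: continuous_compact => //; apply: continuous_subspaceT.
exact: gsc_word_map_continuous.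
Qed.

Lemma near_E' m x : \forall y \near x, F y -> E' D F m x y.
Proof.
pose cells_closed (t : m.-tuple ('I_N * 'I_N)) := @closed_gsc_cell t.
apply: filterS (near_mem_closed_family x cells_closed) => y near_y Fy.
have [w [sw wD wy]] := Omega_nonempty m Fy.
have sw' : size w == m by apply/eqP.
by exists w => //; split=> //; exact: (near_y (Tuple sw')).
Qed.

End Attractor.

Theorem mainTheorem19 (R : realType) (N : nat) (D : {set 'I_N * 'I_N})
  (F : set (R * R)) (x : R * R) :
  (2 <= N)%N -> (1 < #|D|)%N -> (#|D| < N ^ 2)%N ->
  is_gsc_attractor D F -> connected F -> local_cut_point F x ->
  exists2 m : nat, (1 <= m)%N & cut_point (E' D F m x) x.
Proof.
move=> N_gt1 _ _ F_attr _ [U [UF cU [W [oW Wx] WFU] cutU]].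
have [r r_gt0 ballW] : exists2 r : R, 0 < r & ball x r `<=` W.
  by apply/nbhs_ballP; apply: open_nbhs_nbhs.
have [m [m_gt0 E'ball]] := filter_ex
  (filterI (nbhs_infty_gt 0) (E'_subset_ball F_attr x r N_gt1 r_gt0)).
exists m => //.
apply: (cut_point_shrink (@norm_hausdorff R (R * R)%type) cU cutU).
- move=> y E'y; apply: WFU; split; first exact/ballW/E'ball.
  exact: E'_subset_attractor E'y.
- exact/E'_self/UF/cutU.1.
- apply: filterS (near_E' F_attr (ltnW N_gt1) m x) => y E'y /UF; exact: E'y.
Qed.
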